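(* Let $n=2k$ with $k\ge1$, and let $$W(X_1,\dots,X_n)=\sum_{j=1}^nX_j+\sum_{j=1}^n\frac1{X_j}+\prod_{j=1}^nX_j+\prod_{j=1}^n\frac1{X_j}$$ on $(\mathbb{C}^* )^n$. Then every critical point of $W$ in $(\mathbb{C}^* )^n$ is non-degenerate, i.e. the Hessian matrix $(\partial^2W/\partial X_j\partial X_k)$ is invertible at every point where $\nabla W=0$.
   Context: $W$ is the superpotential $\sum_{v\in\mathrm{vert}(P)}x^v$ of the del Pezzo polytope $P^k_{dP}\subset\mathbb{R}^{2k}$. This polytope is the convex hull of $\pm e_1,\dots,\pm e_{2k}$ and $\pm(e_1+\dots+e_{2k})$, and it is the polytope associated with the del Pezzo toric variety $V_k$. *)

From HB Require Import structures.
From mathcomp Require Import all_boot all_order all_algebra.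
Set Implicit Arguments. Unset Strict Implicit. Unset Printing Implicit Defensive.
Import Order.TTheory GRing.Theory Num.Theory.
Local Open Scope ring_scope.

(* Laurent polynomials in n variables over R, represented as a finite list of
   terms (coefficient, exponent vector); the term (c, v) stands for c * x^v. *)
Definition laurent (R : Type) (n : nat) := seq (R * {ffun 'I_n -> int}).

Definition leval (R : unitRingType) (n : nat) (p : laurent R n) (x : 'I_n -> R) : R :=
  \sum_(t <- p) t.1 * \prod_(i < n) (x i) ^ (t.2 i).

Definition lderiv (R : unitRingType) (n : nat) (j : 'I_n) (p : laurent R n) : laurent R n :=
  [seq (t.1 * (t.2 j)%:~R, [ffun i => t.2 i - (if i == j then 1 else 0)] : {ffun 'I_n -> int}) | t : R * {ffun 'I_n -> int} <- p].

Definition evec (n : nat) (j : 'I_n) : {ffun 'I_n -> int} :=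
  [ffun i => if i == j then 1 else 0].
Definition cvec (n : nat) (c : int) : {ffun 'I_n -> int} := [ffun _ => c].

Definition W (R : unitRingType) (n : nat) : laurent R n :=
  [seq (1, evec j) | j <- enum 'I_n]
  ++ [seq (1, [ffun i => - evec j i]) | j <- enum 'I_n]
  ++ [:: (1, cvec n 1); (1, cvec n (-1))].

Definition lgrad (R : unitRingType) (n : nat) (p : laurent R n) (x : 'I_n -> R) (j : 'I_n) : R :=
  leval (lderiv j p) x.
Definition lhessian (R : unitRingType) (n : nat) (p : laurent R n) (x : 'I_n -> R) : 'M[R]_n :=
  \matrix_(j, l) leval (lderiv l (lderiv j p)) x.

From HB Require Import structures.
From mathcomp Require Import all_boot all_order all_algebra.
From mathcomp Require Import ring zify.
Import Order.TTheory GRing.Theory Num.Theory.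
Set Implicit Arguments. Unset Strict Implicit. Unset Printing Implicit Defensive.
Local Open Scope ring_scope.

(* Write P = prod_j x_j.  Differentiating term by term,
     dW/dX_j      = x_j^-1 (x_j - x_j^-1 + P - P^-1),
     d2W/dX_j dX_l = x_j^-1 x_l^-1 ([j = l] (2 x_j^-1 - P + P^-1) + P + P^-1).
   At a critical point x_j - x_j^-1 = P^-1 - P =: c for every j, so with
   d_j = x_j + x_j^-1 and s = P + P^-1 the Hessian is D (diag d + s J) D,
   where D = diag(x_j^-1) and J is the all-ones matrix; moreover
   d_j^2 = c^2 + 4 = s^2, so every ratio s / d_j is a sign +1 or -1.
   The matrix diag d + s J is invertible as soon as all d_j are nonzero and
   1 + s * sum_j d_j^-1 != 0 (a rank-one perturbation of a diagonal matrix);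
   here 1 + s * sum_j d_j^-1 = 1 + (a sum of an even number of signs) is an
   odd integer, hence nonzero in characteristic 0, and s != 0 because s = 0
   would force x_j^2 = -1 for all j and then P^2 = 1, i.e. s = 2P. *)

Section TorusEvaluation.
Variables (F : fieldType) (n : nat) (x : 'I_n -> F).
Hypothesis x_neq0 : forall i, x i != 0.

Definition monomial (v : {ffun 'I_n -> int}) : F := \prod_(i < n) x i ^ v i.

Lemma monomial_lower (v : 'I_n -> int) (j : 'I_n) :
  \prod_(i < n) x i ^ (v i - (if i == j then 1 else 0))
  = (\prod_(i < n) x i ^ v i) * (x j)^-1.
Proof.
rewrite (eq_bigr (fun i => x i ^ v i * (if i == j then (x j)^-1 else 1))).
  by rewrite big_split /= -big_mkcond /= big_pred1_eq.
by move=> i _; case: eqP => [->|_]; rewrite ?subr0 ?mulr1 // expfzDr // exprN1.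
Qed.

Lemma leval_lderiv (j : 'I_n) (p : laurent F n) :
  leval (lderiv j p) x
  = \sum_(t <- p) t.1 * (t.2 j)%:~R * monomial t.2 * (x j)^-1.
Proof.
rewrite /leval /lderiv big_map; apply: eq_bigr => t _ /=.
under eq_bigr => i _ do rewrite ffunE.
by rewrite monomial_lower mulrA.
Qed.

Lemma leval_lderiv2 (j l : 'I_n) (p : laurent F n) :
  leval (lderiv l (lderiv j p)) x
  = \sum_(t <- p) t.1 * (t.2 j)%:~R * (t.2 l - (if l == j then 1 else 0))%:~R
                  * monomial t.2 * (x j)^-1 * (x l)^-1.
Proof.
rewrite leval_lderiv /lderiv big_map; apply: eq_bigr => t _ /=.
rewrite ffunE /monomial.
under eq_bigr => i _ do rewrite ffunE.
by rewrite monomial_lower !mulrA.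
Qed.

Lemma prod_supported_at (f : 'I_n -> int) (i : 'I_n) :
  (forall m, m != i -> f m = 0) -> \prod_(m < n) x m ^ f m = x i ^ f i.
Proof.
by move=> f0; rewrite (bigD1 i) //= big1 ?mulr1 // => m /f0 ->; rewrite expr0z.
Qed.

Definition coord_prod : F := \prod_(i < n) x i.

Lemma coord_prod_neq0 : coord_prod != 0.
Proof. exact/prodf_neq0. Qed.

Lemma monomial_evec i : monomial (evec i) = x i.
Proof.
rewrite /monomial (@prod_supported_at _ i) ?ffunE ?eqxx ?expr1z // => m mi.
by rewrite ffunE (negbTE mi).
Qed.

Lemma monomial_opp_evec i : monomial [ffun m => - evec i m] = (x i)^-1.
Proof.
rewrite /monomial (@prod_supported_at _ i) ?ffunE ?eqxx ?exprN1 // => m mi.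
by rewrite !ffunE (negbTE mi) oppr0.
Qed.

Lemma monomial_cvec1 : monomial (cvec n 1) = coord_prod.
Proof. by apply: eq_bigr => i _; rewrite ffunE expr1z. Qed.

Lemma monomial_cvecN1 : monomial (cvec n (-1)) = coord_prod^-1.
Proof. by rewrite /coord_prod -prodfV; apply: eq_bigr => i _; rewrite ffunE exprN1. Qed.

Lemma lgrad_W j : lgrad (W F n) x j
  = 1 - (x j)^-1 * (x j)^-1 + (coord_prod - coord_prod^-1) * (x j)^-1.
Proof.
rewrite /lgrad leval_lderiv /W !big_cat !big_map !big_cons big_nil /=.
rewrite (bigD1 j) //= big1 => [|i ij]; last first.
  by rewrite ffunE eq_sym (negbTE ij) mulr0z mulr0 !mul0r.
rewrite (bigD1 j) //= big1 => [|i ij]; last first.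
  by rewrite !ffunE eq_sym (negbTE ij) oppr0 mulr0z mulr0 !mul0r.
rewrite !ffunE eqxx monomial_evec monomial_opp_evec monomial_cvec1 monomial_cvecN1.
by rewrite /= ?(mulrNz, mulr1z) !mul1r mulfV //; ring.
Qed.

Lemma lhessian_W j l : lhessian (W F n) x j l
  = (x j)^-1 * (x l)^-1
    * ((j == l)%:R * (2 * (x j)^-1 - coord_prod + coord_prod^-1)
       + (coord_prod + coord_prod^-1)).
Proof.
have P0 := coord_prod_neq0.
rewrite mxE leval_lderiv2 /W !big_cat !big_map !big_cons big_nil /=.
rewrite (bigD1 j) //= big1 => [|i ij]; last first.
  by rewrite ffunE eq_sym (negbTE ij) mulr0z mulr0 !mul0r.
rewrite (bigD1 j) //= big1 => [|i ij]; last first.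
  by rewrite !ffunE eq_sym (negbTE ij) oppr0 mulr0z mulr0 !mul0r.
rewrite !ffunE eqxx monomial_evec monomial_opp_evec monomial_cvec1 monomial_cvecN1.
rewrite [j == l]eq_sym; case: (eqVneq l j) => [->|lj] /=.
  by rewrite !(intrD, intrN, mulrNz, mulr1z) /=; field; rewrite P0 x_neq0.
by rewrite !(intrD, intrN, mulrNz, mulr1z, mulr0z) /=; field; rewrite P0 !x_neq0.
Qed.

End TorusEvaluation.

(* A diagonal matrix perturbed by the constant matrix s J is invertible when
   the diagonal is nonzero and 1 + s * sum_j d_j^-1 != 0: a kernel vector v
   satisfies v_l d_l = - s (sum_j v_j), and summing v_l = - s S / d_l forces
   S = 0, hence v = 0. *)
Lemma diag_add_const_unitmx (F : fieldType) (n : nat) (d : 'I_n -> F) (s : F) :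
  (forall j, d j != 0) -> 1 + s * \sum_j (d j)^-1 != 0 ->
  \matrix_(j, l) ((j == l)%:R * d j + s) \in unitmx.
Proof.
move=> d_neq0 sum_neq0; rewrite unitmxE unitfE; apply/det0P => -[v v_neq0 vM0].
pose S := \sum_j v 0 j.
have kernel_eq l : v 0 l = - (s * S) * (d l)^-1.
  move/matrixP/(_ 0 l): vM0; rewrite !mxE.
  under eq_bigr => j _ do rewrite mxE mulrDr mulrA [_ * _%:R]mulrC -mulrA.
  rewrite big_split /= -big_distrl /= (bigD1 l) //= eqxx mul1r big1 => [|j jl].
    rewrite addr0 -/S [S * s]mulrC => /eqP; rewrite addr_eq0 => /eqP <-.
    by rewrite mulfK.
  by rewrite (negbTE jl) mul0r.
have S0 : S = 0.
  have : S * (1 + s * \sum_j (d j)^-1) = 0.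
    rewrite mulrDr mulr1 mulrA [S * s]mulrC mulr_sumr.
    rewrite {1}/S (eq_bigr _ (fun l _ => kernel_eq l)) -big_split big1 // => l _.
    by rewrite /= mulNr addNr.
  by move/eqP; rewrite mulf_eq0 (negbTE sum_neq0) orbF => /eqP.
case/negP: v_neq0; apply/eqP/rowP => l.
by rewrite kernel_eq S0 mulr0 oppr0 mul0r mxE.
Qed.

(* Rescaling the rows and columns of an invertible matrix by the same
   nonzero factors a_j keeps it invertible (it is diag(a) M diag(a)). *)
Lemma scale_rows_cols_unitmx (F : fieldType) (n : nat) (a : 'I_n -> F) (M N : 'M[F]_n) :
  (forall j, a j != 0) -> (forall j l, N j l = a j * a l * M j l) ->
  M \in unitmx -> N \in unitmx.
Proof.
move=> a_neq0 N_eq M_unit.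
have diag_unit : diag_mx (\row_j a j) \in unitmx.
  by rewrite unitmxE det_diag unitfE; apply/prodf_neq0 => j _; rewrite mxE.
have -> : N = diag_mx (\row_j a j) *m M *m diag_mx (\row_j a j).
  apply/matrixP => j l; rewrite mul_mx_diag mul_diag_mx !mxE N_eq.
  by rewrite mulrAC.
by rewrite !unitmx_mul diag_unit M_unit.
Qed.

(* One plus a sum of an even number of signs is an odd integer, hence nonzero
   in a ring of characteristic 0. *)
Lemma one_add_even_signs_neq0 (R : numDomainType) (n : nat) (e : 'I_n -> R) :
  ~~ odd n -> (forall j, e j ^+ 2 = 1) -> 1 + \sum_j e j != 0.
Proof.
move=> n_even e_sign.
pose b j : int := (e j == 1 : nat).
have e_int j : e j = (2 * b j - 1)%:~R.
  have /eqP := e_sign j; rewrite sqrf_eq1 /b => /orP[] /eqP ->; rewrite ?eqxx //.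
  rewrite (_ : -1 == 1 = false) /=; first by rewrite mulr0 sub0r.
  by apply/negbTE; rewrite eq_sym -subr_eq0 opprK -(natrD _ 1 1) pnatr_eq0.
have sum_int : \sum_j (2 * b j - 1) = 2 * (\sum_j b j) - n%:Z.
  rewrite sumrB -mulr_sumr sumr_const card_ord; congr (_ - _); exact: natz.
rewrite (eq_bigr _ (fun j _ => e_int j)) -rmorph_sum sum_int -[1]/(1%:~R) -intrD.
rewrite intr_eq0.
(* With n = 2h the integer 1 + 2m - n is odd. *)
have [h n_eq] : exists h, n = (2 * h)%N.
  by exists n./2; rewrite -[n in LHS]odd_double_half (negbTE n_even) -mul2n.
move: (\sum_j b j) => m; rewrite n_eq; lia.
Qed.

(* The critical points of W: the whole analysis happens over any field with an
   order and a norm (so of characteristic 0). *)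
Section CriticalPoints.
Variables (F : numFieldType) (n : nat) (x : 'I_n -> F).
Hypothesis x_neq0 : forall i, x i != 0.
Hypothesis x_critical : forall j, lgrad (W F n) x j = 0.

Local Notation P := (coord_prod x).

Let P_neq0 : P != 0. Proof. exact: coord_prod_neq0. Qed.

(* Multiplying dW/dX_j = 0 by x_j: every coordinate satisfies
   x_j - x_j^-1 = P^-1 - P. *)
Lemma critical_relation j : x j - (x j)^-1 = P^-1 - P.
Proof.
apply/eqP; rewrite -subr_eq0.
have -> : x j - (x j)^-1 - (P^-1 - P) = x j * lgrad (W F n) x j.
  by rewrite lgrad_W //; field; rewrite x_neq0.
by rewrite x_critical mulr0.
Qed.

(* Hence (x_j + x_j^-1)^2 = (x_j - x_j^-1)^2 + 4 = (P^-1 - P)^2 + 4 = (P + P^-1)^2. *)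
Lemma critical_sqr j : (x j + (x j)^-1) ^+ 2 = (P + P^-1) ^+ 2.
Proof.
have shift (a : F) : a != 0 -> (a + a^-1) ^+ 2 = (a - a^-1) ^+ 2 + 4.
  by move=> a_neq0; field.
by rewrite (shift _ (x_neq0 j)) (shift _ P_neq0) critical_relation -sqrrN opprB.
Qed.

Lemma critical_lhessian j l : lhessian (W F n) x j l
  = (x j)^-1 * (x l)^-1 * ((j == l)%:R * (x j + (x j)^-1) + (P + P^-1)).
Proof.
rewrite lhessian_W //; congr (_ * (_ * _ + _)).
by rewrite -addrA [- _ + _]addrC -(critical_relation j); ring.
Qed.

(* P + P^-1 vanishes at no critical point when n is even: otherwise every
   x_j + x_j^-1 = 0, i.e. x_j^2 = -1, so P^2 = (-1)^n = 1 and P + P^-1 = 2P. *)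
Lemma critical_P_add_inv_neq0 : ~~ odd n -> P + P^-1 != 0.
Proof.
move=> n_even; apply/negP => /eqP s0.
have x_sqr j : x j ^+ 2 = -1.
  have /eqP : x j + (x j)^-1 = 0.
    by apply/eqP; rewrite -sqrf_eq0 critical_sqr s0 expr0n.
  by rewrite addr_eq0 => /eqP x_eq; rewrite expr2 {2}x_eq mulrN mulfV.
have P_sqr : P ^+ 2 = 1.
  rewrite -prodrXl (eq_bigr _ (fun j _ => x_sqr j)) prodr_const card_ord.
  by rewrite -signr_odd (negbTE n_even).
have P_inv : P^-1 = P by rewrite -[P^-1]mul1r -P_sqr expr2 mulfK.
by move/eqP: s0; rewrite P_inv -mulr2n mulrn_eq0 /= (negbTE P_neq0).
Qed.

End CriticalPoints.

Theorem mainTheorem6 (C : numClosedFieldType) (k : nat) (hk : (1 <= k)%N)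
  (x : 'I_(2 * k) -> C) :
  (forall i, x i != 0) ->
  (forall j, lgrad (W C (2 * k)) x j = 0) ->
  lhessian (W C (2 * k)) x \in unitmx.
Proof.
move=> x_neq0 x_critical.
have n_even : ~~ odd (2 * k) by rewrite oddM.
set d := fun j => x j + (x j)^-1.
set s := coord_prod x + (coord_prod x)^-1.
have s_neq0 : s != 0 by exact: critical_P_add_inv_neq0.
have d_sqr j : d j ^+ 2 = s ^+ 2 by exact: critical_sqr.
have d_neq0 j : d j != 0 by rewrite -sqrf_eq0 d_sqr sqrf_eq0.
apply: (scale_rows_cols_unitmx (a := fun j => (x j)^-1)
                               (M := \matrix_(j, l) ((j == l)%:R * d j + s))).
- by move=> j; rewrite invr_eq0.
- by move=> j l; rewrite critical_lhessian // mxE.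
(* Each s / d_j is a sign, and there is an even number of them. *)
apply: diag_add_const_unitmx => //; rewrite mulr_sumr.
apply: one_add_even_signs_neq0 => // j.
by rewrite expr_div_n d_sqr divff // expf_neq0.
Qed.
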